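(* Let $A,B$ be finite groups. (1) If $B$ is SMP, then $A\times B$ is MP if and only if $A$ is MP. (2) $A\times B$ is SMP if and only if both $A$ and $B$ are SMP.
   Context: A group $G$ has the Magnus Property (MP) if whenever $x,y\in G$ have the same normal closure in $G$, $x$ is conjugate in $G$ to $y$ or to $y^{-1}$; it has the Strong Magnus Property (SMP) if whenever $x,y\in G$ have the same normal closure, $x$ is conjugate to $y$. *)

From mathcomp Require Import all_boot all_fingroup.
From mathcomp Require Import gproduct.
Set Implicit Arguments. Unset Strict Implicit. Unset Printing Implicit Defensive.
Local Open Scope group_scope.

Definition normal_closure (gT : finGroupType) (x : gT) : {set gT} :=
  <<x ^: [set: gT]>>.

Definition conjugate (gT : finGroupType) (x y : gT) : Prop :=
  exists g : gT, x = y ^ g.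

Definition MP (gT : finGroupType) : Prop :=
  forall x y : gT, normal_closure x = normal_closure y ->
    conjugate x y \/ conjugate x y^-1.

Definition SMP (gT : finGroupType) : Prop :=
  forall x y : gT, normal_closure x = normal_closure y -> conjugate x y.

From Pilot Require Import Defs.
From mathcomp Require Import all_boot all_fingroup.
From mathcomp Require Import gproduct.
Set Implicit Arguments. Unset Strict Implicit. Unset Printing Implicit Defensive.
Local Open Scope group_scope.

(* Conjugation by the factor 1 x B fixes A x 1 pointwise, so the normal closure
   of (a, 1) in A x B is the image of that of a in A; conversely the projections
   map normal closures onto normal closures.  Since conjugacy in A x B is
   componentwise, MP and SMP pass to the factors, and SMP passes back to
   A x B.  For MP, (a, b) ~ (c, d)^-1 needs b ~ d^-1 besides a ~ c^-1; this is
   where SMP for B is used, as d and d^-1 have the same normal closure. *)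

Lemma normal_closureV (gT : finGroupType) (x : gT) :
  normal_closure x^-1 = normal_closure x.
Proof. by rewrite /normal_closure classVg genV. Qed.

Lemma conjugate_trans (gT : finGroupType) (x y z : gT) :
  Defs.conjugate x y -> Defs.conjugate y z -> Defs.conjugate x z.
Proof. by move=> [g ->] [h ->]; exists (h * g); rewrite conjgM. Qed.

Lemma SMP_conjugateV (gT : finGroupType) (x : gT) :
  SMP gT -> Defs.conjugate x x^-1.
Proof. by move=> smpG; apply: smpG; rewrite normal_closureV. Qed.

Lemma class_mul_cent (gT : finGroupType) (K : {group gT}) (x : gT) :
  x \in K -> x ^: (K * 'C(K)) = x ^: K.
Proof.
move=> Kx; apply/eqP; rewrite eqEsubset (imsetS _ (mulG_subl _ _)) andbT.
apply/subsetP=> _ /imsetP[_ /mulsgP[k c Kk Cc ->] ->].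
have -> : x ^ (k * c) = x ^ k.
  rewrite conjgM; apply/conjg_fixP/commgP/commute_sym/(centP Cc).
  by rewrite groupJ.
exact: imset_f.
Qed.

Lemma morphim_normal_closure (gT rT : finGroupType)
    (f : {morphism [set: gT] >-> rT}) (x : gT) :
  [set: rT] \subset f @* [set: gT] * 'C(f @* [set: gT]) ->
  f @* normal_closure x = normal_closure (f x).
Proof.
move=> genT; rewrite /normal_closure morphim_gen ?subsetT //.
rewrite morphim_class ?inE ?subsetT //.
have -> : [set: rT] = f @* [set: gT] * 'C(f @* [set: gT]).
  by apply/eqP; rewrite eqEsubset subsetT andbT.
by rewrite class_mul_cent // mem_morphim ?inE.
Qed.

Section DirectProduct.
Variables A B : finGroupType.

Lemma conjugate_pair (a c : A) (b d : B) :
  Defs.conjugate ((a, b) : A * B) (c, d) <->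
  Defs.conjugate a c /\ Defs.conjugate b d.
Proof.
split; first by move=> [[g h] [-> ->]]; split; [exists g | exists h].
by move=> [[g ->] [h ->]]; exists (g, h).
Qed.

Lemma setXTT : setX [set: A] [set: B] = [set: A * B].
Proof. by apply/setP=> [[a b]]; rewrite !inE. Qed.

Lemma dprod_pairg1_pair1g :
  pairg1 B @* [set: A] \x @pair1g A B @* [set: B] = [set: A * B].
Proof. by rewrite morphim_pairg1 morphim_pair1g setX_dprod setXTT. Qed.

Lemma morphim_fst_normal_closure (x : A * B) :
  [morphism of [eta fst]] @* normal_closure x = normal_closure x.1.
Proof.
apply: morphim_normal_closure.
by rewrite -[X in _ @* X]setXTT morphim_fstX mulG_subl.
Qed.

Lemma morphim_snd_normal_closure (x : A * B) :
  [morphism of [eta snd]] @* normal_closure x = normal_closure x.2.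
Proof.
apply: morphim_normal_closure.
by rewrite -[X in _ @* X]setXTT morphim_sndX mulG_subl.
Qed.

Lemma morphim_pairg1_normal_closure (a : A) :
  pairg1 B @* normal_closure a = normal_closure ((a, 1) : A * B).
Proof.
apply: morphim_normal_closure.
have [_ <- cKL _] := dprodP dprod_pairg1_pair1g.
exact: mulgS cKL.
Qed.

Lemma morphim_pair1g_normal_closure (b : B) :
  @pair1g A B @* normal_closure b = normal_closure ((1, b) : A * B).
Proof.
apply: morphim_normal_closure.
have [_ <- cKL _] := dprodP dprod_pairg1_pair1g.
by rewrite -(centC cKL) mulgS // centsC.
Qed.

Lemma eq_normal_closure_pair (a c : A) (b d : B) :
  normal_closure ((a, b) : A * B) = normal_closure (c, d) ->
  normal_closure a = normal_closure c /\ normal_closure b = normal_closure d.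
Proof.
move=> eq_ncl; split.
  rewrite -(morphim_fst_normal_closure (a, b)) eq_ncl.
  by rewrite morphim_fst_normal_closure.
rewrite -(morphim_snd_normal_closure (a, b)) eq_ncl.
by rewrite morphim_snd_normal_closure.
Qed.

Lemma MP_factorl : MP (A * B)%type -> MP A.
Proof.
move=> mpAB x y eq_ncl.
have /mpAB : normal_closure ((x, 1) : A * B) = normal_closure (y, 1).
  by rewrite -!morphim_pairg1_normal_closure eq_ncl.
by case=> /conjugate_pair[cxy _]; [left | right].
Qed.

Lemma SMP_factorl : SMP (A * B)%type -> SMP A.
Proof.
move=> smpAB x y eq_ncl.
suff /smpAB/conjugate_pair[] :
    normal_closure ((x, 1) : A * B) = normal_closure (y, 1) by [].
by rewrite -!morphim_pairg1_normal_closure eq_ncl.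
Qed.

Lemma SMP_factorr : SMP (A * B)%type -> SMP B.
Proof.
move=> smpAB x y eq_ncl.
suff /smpAB/conjugate_pair[] :
    normal_closure ((1, x) : A * B) = normal_closure (1, y) by [].
by rewrite -!morphim_pair1g_normal_closure eq_ncl.
Qed.

Lemma MP_prod : MP A -> SMP B -> MP (A * B)%type.
Proof.
move=> mpA smpB [a b] [c d] /eq_normal_closure_pair[/mpA cac /smpB cbd].
case: cac => cac; [left | right]; apply/conjugate_pair; split=> //.
exact: conjugate_trans cbd (SMP_conjugateV _ smpB).
Qed.

Lemma SMP_prod : SMP A -> SMP B -> SMP (A * B)%type.
Proof.
move=> smpA smpB [a b] [c d] /eq_normal_closure_pair[/smpA cac /smpB cbd].
exact/conjugate_pair.
Qed.

End DirectProduct.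

Theorem proposition4p2 (A B : finGroupType) :
  (SMP B -> (MP (A * B)%type <-> MP A)) /\
  (SMP (A * B)%type <-> SMP A /\ SMP B).
Proof.
split=> [smpB | ].
  by split=> [mpAB | mpA]; [apply: MP_factorl mpAB | apply: MP_prod mpA smpB].
split=> [smpAB | [smpA smpB]]; last exact: SMP_prod.
by split; [apply: SMP_factorl smpAB | apply: SMP_factorr smpAB].
Qed.
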